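(* Let $X,Y$ be Banach spaces over $\mathbb{K}\in\{\mathbb{R},\mathbb{C}\}$ and let $G\in L(X,Y)$ with $\|G\|=1$. Then for each $T\in L(X,Y)$ the following are equivalent: (i) $\max_{\omega\in S^1}\|G+\omega T\|_G = 1+\|T\|_G$; (ii) $\nu_G(T)=\|T\|_G$.
   Context: $S^1=\{\lambda\in\mathbb{K}:|\lambda|=1\}$; $S_X$ is the unit sphere of $X$, $Y^*$ the dual of $Y$. For $T\in L(X,Y)$: $\|T\|_G := \inf_{\delta>0}\sup\{\|Tx\|: x\in S_X,\ \|Gx\|>1-\delta\}$; $V_G(T):=\bigcap_{\delta>0}\overline{\{y^*(Tx): x\in S_X,\ y^*\in S_{Y^*},\ \operatorname{Re} y^*(Gx)>1-\delta\}}$ and $\nu_G(T):=\max\{|\lambda|:\lambda\in V_G(T)\}$. Standing assumption of the paper: $\|\cdot\|_G$ is a norm on $L(X,Y)$. *)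

From HB Require Import structures.
From mathcomp Require Import all_boot all_order all_algebra.
From mathcomp Require Import all_classical all_reals all_analysis.
From mathcomp Require complex.
Import complex.ComplexField.
Import Order.TTheory GRing.Theory Num.Theory.
Import numFieldNormedType.Exports.

Set Implicit Arguments.
Unset Strict Implicit.
Unset Printing Implicit Defensive.

Local Open Scope ring_scope.
Local Open Scope classical_set_scope.

(* Generic setting: scalar field K (later K = R or K = R[i]) with a
   real-part map [re : K -> R] used to read off real numbers from
   K-valued norms and for "Re y*(Gx)". *)
Section NumericalIndex.
Context (R : realType) (K : numFieldType) (re : K -> R).

Definition bdd_linear (U V : normedModType K) (f : U -> V) : Prop :=
  (forall (a : K) (u v : U), f (a *: u + v) = a *: f u + f v) /\ continuous f.

Definition opnorm (U V : normedModType K) (f : U -> V) : \bar R :=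
  ereal_sup [set (re `|f x|)%:E | x in [set x : U | `|x| = 1]].

Context (X Y : normedModType K).

Definition dual_sphere : set (Y -> K^o) :=
  [set ys | bdd_linear ys /\ opnorm ys = 1%:E].

Definition Gnorm (G T : X -> Y) : \bar R :=
  ereal_inf [set ereal_sup [set (re `|T x|)%:E
                           | x in [set x : X | `|x| = 1 /\ 1 - d < re `|G x|]]
            | d in [set d : R | 0 < d]].

Definition Gnumset (G T : X -> Y) (d : R) : set K :=
  [set l | exists x : X, exists ys : Y -> K^o,
     [/\ `|x| = 1, dual_sphere ys, 1 - d < re (ys (G x)) & l = ys (T x)]].

Definition Gnumrange (G T : X -> Y) : set K :=
  [set l | forall d : R, 0 < d -> closure (Gnumset G T d) l].

(* nu_G(T) = max { |l| : l in V_G(T) } (rendered as a sup) *)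
Definition Gnumradius (G T : X -> Y) : \bar R :=
  ereal_sup [set (re `|l|)%:E | l in Gnumrange G T].

Definition Gnorm_is_norm (G : X -> Y) : Prop :=
  forall S T : X -> Y, bdd_linear S -> bdd_linear T ->
  [/\ Gnorm G T \is a fin_num,
      (Gnorm G (fun x => (S x + T x)%R) <= Gnorm G S + Gnorm G T)%E,
      (forall a : K, Gnorm G (fun x => (a *: T x)%R) = ((re `|a|)%:E * Gnorm G T)%E)
    & (Gnorm G T = 0%E -> forall x, T x = 0)].

End NumericalIndex.

Definition thm3p1_for (R : realType) (K : numFieldType) (re : K -> R) : Prop :=
  forall (X Y : completeNormedModType K) (G T : X -> Y),
    bdd_linear G -> opnorm re G = 1%:E -> Gnorm_is_norm re G ->
    bdd_linear T ->
    (ereal_sup [set Gnorm re G (fun x => G x + w *: T x) | w in [set w : K | `|w| = 1]]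
       = (1%:E + Gnorm re G T)%E
     <-> Gnumradius re G T = Gnorm re G T).

From HB Require Import structures.
From mathcomp Require Import all_boot all_order all_algebra.
From mathcomp Require Import all_classical all_reals all_analysis.
From mathcomp Require complex.
Import complex.ComplexField.
From mathcomp Require Import ring lra.
Import Order.TTheory GRing.Theory Num.Theory.
Import numFieldNormedType.Exports.

Set Implicit Arguments.
Unset Strict Implicit.
Unset Printing Implicit Defensive.

Local Open Scope ring_scope.
Local Open Scope classical_set_scope.

(* Let W be the supremum of ||G + wT||_G over |w| = 1.  Since ||.||_G is a
   norm and ||G||_G <= 1, W <= 1 + ||T||_G; and nu_G(T) <= ||T||_G because
   |y*(Tx)| <= ||Tx||.  If l is in V_G(T) and |w| = 1 with w l = |l|, the
   witnesses x, y* of l give ||Gx + wTx|| >= Re y*(Gx) + Re (w y*(Tx)), which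
   is close to 1 + |l|; so 1 + nu_G(T) <= W and (ii) implies (i).  Conversely,
   if W = 1 + ||T||_G, take x and w with ||Gx + wTx|| close to 1 + ||T||_G,
   and a Hahn-Banach functional y* norming Gx + wTx: then Re y*(Gx) is close
   to 1 and |y*(Tx)| is close to ||T||_G.  By Bolzano-Weierstrass in K these
   values y*(Tx) accumulate at a point of V_G(T) of modulus ||T||_G.
   The argument runs over a scalar field K with an abstract real part and is
   then specialised to R and C; complex Hahn-Banach is obtained from the real
   one on the underlying real space. *)

Section HahnBanach.
Variables (R : realType) (V : lmodType R) (p : V -> R).
Hypothesis p_add : forall x y, p (x + y) <= p x + p y.
Hypothesis p_scale : forall t x, p (t *: x) = `|t| * p x.

Lemma sublinear0 : p 0 = 0.
Proof. by rewrite -(scale0r 0) p_scale normr0 mul0r. Qed.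

Lemma sublinear_ge0 x : 0 <= p x.
Proof.
have := p_add x (- x); rewrite subrr sublinear0 -scaleN1r p_scale.
rewrite normrN normr1 mul1r; lra.
Qed.

Definition dominated_graph (A : set (V * R)) :=
  [/\ forall x r y s, A (x, r) -> A (y, s) -> A (x + y, r + s),
      forall t x r, A (x, r) -> A (t *: x, t * r)
    & forall x r, A (x, r) -> r <= p x].

Section DominatedGraph.
Variable A : set (V * R).
Hypothesis domA : dominated_graph A.

Lemma dominated_graph_sub x r y s : A (x, r) -> A (y, s) -> A (x - y, r - s).
Proof.
case: domA => addA scaleA _ Ax Ay.
by rewrite -[- y]scaleN1r -[- s]mulN1r; apply: addA; last exact: scaleA.
Qed.

Lemma dominated_graph_functional x r r' : A (x, r) -> A (x, r') -> r = r'.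
Proof.
case: domA => _ _ leA Ar Ar'.
have := leA _ _ (dominated_graph_sub Ar Ar').
have := leA _ _ (dominated_graph_sub Ar' Ar).
rewrite subrr sublinear0; lra.
Qed.

Lemma dominated_graph_gap z : A !=set0 ->
  exists c, (forall x r, A (x, r) -> r - p (x - z) <= c) /\
            (forall y s, A (y, s) -> c <= p (y + z) - s).
Proof.
case: domA => addA _ leA [[x0 r0] A0].
have gap x r y s : A (x, r) -> A (y, s) -> r - p (x - z) <= p (y + z) - s.
  move=> Ax Ay; have := leA _ _ (addA _ _ _ _ Ax Ay).
  have := p_add (x - z) (y + z); rewrite addrCA subrK addrC; lra.
pose S := [set q.2 - p (q.1 - z) | q in A].
have S0 : S !=set0 by exists (r0 - p (x0 - z)), (x0, r0).
have Sub : ubound S (p (x0 + z) - r0) by move=> _ [[x r] Ax <-]; exact: gap.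
exists (sup S); split.
- by move=> x r Ax; apply: sup_upper_bound; [split; last exists (p (x0 + z) - r0) | exists (x, r)].
- by move=> y s Ay; apply: ge_sup => // _ [[x r] Ax <-]; exact: gap.
Qed.

Definition graph_extension z c : set (V * R) :=
  [set q | exists x r t, A (x, r) /\ q = (x + t *: z, r + t * c)].

Lemma graph_extension_dominated z c :
  (forall x r, A (x, r) -> r - p (x - z) <= c) ->
  (forall y s, A (y, s) -> c <= p (y + z) - s) ->
  dominated_graph (graph_extension z c).
Proof.
case: domA => addA scaleA leA cl cu; split.
- move=> _ _ _ _ [x [r [t [Ax [-> ->]]]]] [y [s [t' [Ay [-> ->]]]]].
  exists (x + y), (r + s), (t + t'); split; first exact: addA.
  by rewrite scalerDl mulrDl; congr (_, _); rewrite addrACA.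
- move=> a _ _ [x [r [t [Ax [-> ->]]]]].
  exists (a *: x), (a * r), (a * t); split; first exact: scaleA.
  by rewrite scalerDr scalerA mulrDr mulrA.
- move=> _ _ [x [r [t [Ax [-> ->]]]]].
  have [t0|t0|->] := ltgtP t 0; last by rewrite scale0r mul0r !addr0; exact: leA.
  + have nt0 : 0 < - t by rewrite oppr_gt0.
    have := cl _ _ (scaleA (- t)^-1 _ _ Ax).
    have -> : (- t)^-1 *: x - z = (- t)^-1 *: (x + t *: z).
      by rewrite scalerDr scalerA invrN mulNr mulVf ?ltr0_neq0 // scaleN1r.
    rewrite p_scale gtr0_norm ?invr_gt0 // => h.
    have := ler_wpM2l (ltW nt0) h.
    by rewrite mulrBr !mulrA mulfV ?oppr_eq0 ?ltr0_neq0 // !mul1r; lra.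
  + have := cu _ _ (scaleA t^-1 _ _ Ax).
    have -> : t^-1 *: x + z = t^-1 *: (x + t *: z).
      by rewrite scalerDr scalerA mulVf ?gt_eqF // scale1r.
    rewrite p_scale gtr0_norm ?invr_gt0 // => h.
    have := ler_wpM2l (ltW t0) h.
    by rewrite mulrBr !mulrA mulfV ?gt_eqF // !mul1r; lra.
Qed.

End DominatedGraph.

Lemma dominated_graph_bigcup (F : set (set (V * R))) :
  F `<=` dominated_graph -> total_on F subset ->
  dominated_graph (\bigcup_(A in F) A).
Proof.
move=> Fdom Ftot.
have common q q' : (\bigcup_(A in F) A) q -> (\bigcup_(A in F) A) q' ->
    exists2 A, F A & A q /\ A q'.
  move=> [A FA Aq] [A' FA' Aq'].
  have [AA'|A'A] := Ftot _ _ FA FA'.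
  - by exists A' => //; split => //; exact: AA'.
  - by exists A => //; split => //; exact: A'A.
split.
- move=> x r y s Ax Ay; have [A FA [{}Ax {}Ay]] := common _ _ Ax Ay.
  by have [addA _ _] := Fdom _ FA; exists A => //; exact: addA.
- move=> t x r [A FA Ax]; have [_ scaleA _] := Fdom _ FA.
  by exists A => //; exact: scaleA.
- by move=> x r [A FA Ax]; have [_ _ leA] := Fdom _ FA; exact: leA.
Qed.

Lemma dominated_graph_line y0 : dominated_graph [set (t *: y0, t * p y0) | t in [set: R]].
Proof.
split.
- move=> _ _ _ _ [t _ [<- <-]] [t' _ [<- <-]].
  by exists (t + t') => //; rewrite scalerDl mulrDl.
- by move=> a _ _ [t _ [<- <-]]; exists (a * t) => //; rewrite scalerA mulrA.
- move=> _ _ [t _ [<- <-]]; rewrite p_scale.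
  by apply: ler_wpM2r; [exact: sublinear_ge0 | exact: ler_norm].
Qed.

Theorem hahn_banach_sublinear y0 : exists u : V -> R,
  [/\ scalar u, forall x, u x <= p x & u y0 = p y0].
Proof.
pose L := [set (t *: y0, t * p y0) | t in [set: R]].
(* The alternative [A = set0] gives the empty chain an upper bound. *)
have [A [[domA LA] maxA]] :
    exists A, (dominated_graph A /\ (A = set0 \/ L `<=` A)) /\
      forall B, A `<` B -> ~ (dominated_graph B /\ (B = set0 \/ L `<=` B)).
  apply: Zorn_bigcup => F FP Ftot; split.
    by apply: dominated_graph_bigcup => // A /FP [].
  have [[A FA LA]|noA] := pselect (exists2 A, F A & L `<=` A).
    by right => q Lq; exists A => //; exact: LA.
  left; apply/seteqP; split => // q [A FA Aq].
  have [_ [A0|LA]] := FP _ FA; first by rewrite A0 in Aq.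
  by case: noA; exists A.
have Ly0 : L (y0, p y0) by exists 1; rewrite ?scale1r ?mul1r.
have {}LA : L `<=` A.
  case: LA => // A0; case: (maxA L); last by split; [exact: dominated_graph_line | right].
  by rewrite A0; split => // /(_ _ Ly0).
have [addA scaleA leA] := domA.
have A00 : A (0, 0) by have := scaleA 0 _ _ (LA _ Ly0); rewrite scale0r mul0r.
have total z : exists r, A (z, r).
  apply: contrapT => Az.
  have [|c [cl cu]] := dominated_graph_gap domA z; first by exists (y0, p y0); exact: LA.
  apply: (maxA (graph_extension A z c)); last first.
    split; first exact: graph_extension_dominated.
    by right => q /LA Aq; exists q.1, q.2, 0; rewrite scale0r mul0r !addr0; case: q Aq.
  split; first by move=> [x r] Ax; exists x, r, 0; rewrite scale0r mul0r !addr0.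
  move=> /(_ (z, c)) zc; apply: Az; exists c; apply: zc.
  by exists 0, 0, 1; rewrite scale1r mul1r !add0r.
pose u z := projT1 (cid (total z)).
have Au z : A (z, u z) by rewrite /u; case: cid.
exists u; split.
- move=> a x y; apply: (dominated_graph_functional domA (Au _)).
  exact: addA (scaleA a _ _ (Au x)) (Au y).
- by move=> x; exact: leA.
- exact: (dominated_graph_functional domA (Au _) (LA _ Ly0)).
Qed.

End HahnBanach.

Lemma linear_map0 (S : pzRingType) (U W : lmodType S) (f : U -> W) :
  linear f -> f 0 = 0.
Proof. by move=> lf; rewrite -(subrr 0) (zmod_morphism_linear lf) subrr. Qed.

Lemma bdd_linear_scale (K : numFieldType) (U V : normedModType K) (f : U -> V) w :
  bdd_linear f -> bdd_linear (fun x => w *: f x).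
Proof.
move=> [lf cf]; split; last by move=> x; apply: continuousZ; [exact: cvg_cst | exact: cf].
by move=> a u v; rewrite lf scalerDr !scalerA mulrC.
Qed.

Section RealPart.
Variables (R : realType) (K : numFieldType) (re : K -> R) (emb : {rmorphism R -> K}).
Hypothesis reD : {morph re : a b / a + b}.
Hypothesis re_le_norm : forall a, re a <= re `|a|.
Hypothesis emb_mono : {mono emb : s t / s <= t}.
Hypothesis embK : cancel emb re.
Hypothesis re_nnegK : forall a, 0 <= a -> emb (re a) = a.

Lemma re0 : re 0 = 0.
Proof. by rewrite -(rmorph0 emb) embK. Qed.

Lemma re1 : re 1 = 1.
Proof. by rewrite -(rmorph1 emb) embK. Qed.

Lemma reN a : re (- a) = - re a.
Proof. by apply/eqP; rewrite -subr_eq0 opprK -reD addNr re0. Qed.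

Lemma ler_re a b : 0 <= a -> 0 <= b -> (re a <= re b) = (a <= b).
Proof. by move=> a0 b0; rewrite -emb_mono !re_nnegK. Qed.

Lemma ltr_re a b : 0 <= a -> 0 <= b -> (re a < re b) = (a < b).
Proof. by move=> a0 b0; rewrite -(leW_mono emb_mono) !re_nnegK. Qed.

Lemma re_ge0 a : 0 <= a -> 0 <= re a.
Proof. by move=> a0; rewrite -re0 ler_re. Qed.

Lemma re_gt0 a : 0 < a -> 0 < re a.
Proof. by move=> a0; rewrite -re0 ltr_re // ltW. Qed.

Lemma emb_gt0 t : 0 < t -> 0 < emb t.
Proof. by rewrite -(rmorph0 emb) (leW_mono emb_mono). Qed.

Lemma re_Nnorm_le a : - re `|a| <= re a.
Proof. by rewrite lerNl -reN -normrN re_le_norm. Qed.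

Lemma re_mulr_nneg a b : 0 <= a -> 0 <= b -> re (a * b) = re a * re b.
Proof. by move=> a0 b0; rewrite -{1}(re_nnegK a0) -{1}(re_nnegK b0) -rmorphM embK. Qed.

Lemma re_normM a b : re `|a * b| = re `|a| * re `|b|.
Proof. by rewrite normrM re_mulr_nneg. Qed.

Lemma re_norm_ge0 (V : normedZmodType K) (v : V) : 0 <= re `|v|.
Proof. exact: re_ge0. Qed.

Lemma re_normD (V : normedZmodType K) (u v : V) : re `|u + v| <= re `|u| + re `|v|.
Proof. by rewrite -reD ler_re ?addr_ge0 ?ler_normD. Qed.

Lemma closure_reP (A : set K) l :
  closure A l <-> forall e, 0 < e -> exists2 a, A a & re `|a - l| < e.
Proof.
split=> [Al e e0 | Al B /nbhs_ballP [e /= e0 eB]].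
- have /Al [a [Aa]] : nbhs l (ball l (emb e)) by apply/nbhsx_ballx/emb_gt0.
  rewrite -ball_normE /= distrC => lae; exists a => //.
  by rewrite -(embK e) ltr_re // ltW // emb_gt0.
- have [a Aa ale] := Al _ (re_gt0 e0).
  by exists a; split => //; apply: eB; rewrite -ball_normE /= distrC -ltr_re // ltW.
Qed.

Section DualSphere.
Variable Y : normedModType K.

Lemma dual_sphere_le (ys : Y -> K^o) y : dual_sphere re ys -> re `|ys y| <= re `|y|.
Proof.
move=> [[lys _] ys1]; have [->|y0] := eqVneq y 0; first by rewrite (linear_map0 lys) !normr0.
have ny : `|y| \is a GRing.unit by rewrite unitfE normr_eq0.
pose u := `|y|^-1 *: y.
have : ((re `|ys u|)%:E <= 1)%E.
  by rewrite -ys1; apply: ereal_sup_ubound; exists u => //; exact: normrZV.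
rewrite lee_fin => ys1u.
have -> : ys y = `|y| * ys u by rewrite -(scalable_linear lys) /u scalerA divrr // scale1r.
by rewrite re_normM normr_id -[X in _ <= X]mulr1 ler_wpM2l ?re_norm_ge0.
Qed.

Lemma dual_sphere_norming (f : Y -> K) y : scalar f -> (forall v, `|f v| <= `|v|) ->
  y != 0 -> re (f y) = re `|y| -> dual_sphere re (f : Y -> K^o).
Proof.
move=> lf fle y0 fy; split; first split => //.
- move=> x; apply/cvgrPdist_lt => e e0; near=> t.
  rewrite -(zmod_morphism_linear lf); apply: le_lt_trans (fle _) _.
  by near: t; apply: (cvgr_dist_lt id).
- apply/eqP; rewrite eq_le; apply/andP; split.
    by apply/ereal_supP => _ [x /= x1 <-]; rewrite lee_fin -re1 -x1 ler_re.
  have ny : `|y| \is a GRing.unit by rewrite unitfE normr_eq0.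
  apply: ereal_sup_ubound; exists (`|y|^-1 *: y); first exact: normrZV.
  have fyE : re `|f y| = re `|y|.
    by apply/eqP; rewrite eq_le ler_re // fle -{1}fy re_le_norm.
  rewrite (scalable_linear lf) /= re_normM normrV // normr_id fyE.
  by rewrite -re_mulr_nneg ?invr_ge0 // mulVr // re1.
Unshelve. all: by end_near.
Qed.

End DualSphere.

Section GNorm.
Variables (X Y : normedModType K) (G : X -> Y).
Hypothesis G1 : opnorm re G = 1%:E.

Definition Gsup (S : X -> Y) (d : R) : \bar R :=
  ereal_sup [set (re `|S x|)%:E | x in [set x : X | `|x| = 1 /\ 1 - d < re `|G x|]].

Lemma Gnorm_le_Gsup S d : 0 < d -> (Gnorm re G S <= Gsup S d)%E.
Proof. by move=> d0; apply: ereal_inf_lbound; exists d. Qed.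

Lemma Gsup_lt_Gnorm S e : Gnorm re G S \is a fin_num -> 0 < e ->
  exists2 d, 0 < d & (Gsup S d < Gnorm re G S + e%:E)%E.
Proof. by move=> Sfin e0; have [_ [d d0 <-]] := lb_ereal_inf_adherent e0 Sfin; exists d. Qed.

Lemma Gsup_ub S d x : `|x| = 1 -> 1 - d < re `|G x| -> ((re `|S x|)%:E <= Gsup S d)%E.
Proof. by move=> x1 Gx; apply: ereal_sup_ubound; exists x. Qed.

Lemma Gsup_gt S d r : (r%:E < Gsup S d)%E ->
  exists x, [/\ `|x| = 1, 1 - d < re `|G x| & r < re `|S x|].
Proof. by move=> /ereal_sup_gt [_ [x [x1 Gx] <-]]; rewrite lte_fin; exists x. Qed.

Lemma Gnumset_le T d d' : d <= d' -> Gnumset re G T d `<=` Gnumset re G T d'.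
Proof.
move=> dd' _ [x [ys [x1 ys1 Gx ->]]]; exists x, ys; split => //.
by apply: le_lt_trans Gx; rewrite lerB.
Qed.

Lemma Gnumset_witness T d l : Gnumset re G T d l ->
  exists x, [/\ `|x| = 1, 1 - d < re `|G x| & re `|l| <= re `|T x|].
Proof.
move=> [x [ys [x1 ys1 Gx ->]]]; exists x; split => //; last exact: dual_sphere_le.
by apply: lt_le_trans Gx (le_trans (re_le_norm _) (dual_sphere_le _ ys1)).
Qed.

Lemma Gnumradius_le_Gnorm T : Gnorm re G T \is a fin_num ->
  (Gnumradius re G T <= Gnorm re G T)%E.
Proof.
move=> Tfin; rewrite -(fineK Tfin); apply/ereal_supP => _ [l Vl <-].
rewrite lee_fin; apply/ler_addgt0Pr => e e0.
have e20 : 0 < e / 2 by rewrite divr_gt0.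
have [d d0] := Gsup_lt_Gnorm Tfin e20; rewrite -{1}(fineK Tfin) => dT.
have [a Va al] := (closure_reP _ _).1 (Vl d d0) _ e20.
have [x [x1 Gx ax]] := Gnumset_witness Va.
have := le_lt_trans (Gsup_ub T x1 Gx) dT; rewrite -EFinD lte_fin => Tx.
have := re_normD a (l - a); rewrite addrC subrK distrC; lra.
Qed.

Lemma Gnorm_ge_Gnumrange T l w : Gnumrange re G T l -> `|w| = 1 ->
  ((1 + re (w * l))%:E <= Gnorm re G (fun x => (G x + w *: T x)%R))%E.
Proof.
move=> Vl w1; apply/ereal_infP => _ [d d0 <-]; apply/lee_subgt0Pr => e e0.
have e20 : 0 < e / 2 by rewrite divr_gt0.
have de0 : 0 < Num.min d (e / 2) by rewrite lt_min d0 e20.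
have [_ [x [ys [x1 ys1 Gx ->]]] al] := (closure_reP _ _).1 (Vl _ de0) _ e20.
have [[lys _] _] := ys1.
have Gxd : 1 - d < re `|G x|.
  apply: le_lt_trans (lt_le_trans Gx (le_trans (re_le_norm _) (dual_sphere_le _ ys1))).
  by rewrite lerB // ge_min lexx.
apply: le_trans (Gsup_ub _ x1 Gxd); rewrite -EFinB lee_fin.
have ysGT : re (ys (G x + w *: T x)) = re (ys (G x)) + re (w * ys (T x)).
  by rewrite addrC lys addrC reD.
have wl : re (w * l) - re `|ys (T x) - l| <= re (w * ys (T x)).
  have -> : w * ys (T x) = w * l + w * (ys (T x) - l) by rewrite -mulrDr addrC subrK.
  rewrite reD lerD2l.
  by rewrite -[re `|_ - _|]mul1r -re1 -w1 -re_normM re_Nnorm_le.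
have := le_trans (re_le_norm _) (dual_sphere_le (G x + w *: T x) ys1).
have : Num.min d (e / 2) <= e / 2 by rewrite ge_min lexx orbT.
lra.
Qed.

Lemma norm_G_le1 x : `|x| = 1 -> re `|G x| <= 1.
Proof. by move=> x1; rewrite -lee_fin -G1; apply: ereal_sup_ubound; exists x. Qed.

Lemma Gnorm_G_le1 : (Gnorm re G G <= 1)%E.
Proof.
apply: le_trans (Gnorm_le_Gsup G ltr01) _.
by apply/ereal_supP => _ [x [x1 _] <-]; rewrite lee_fin norm_G_le1.
Qed.

Definition rotation_sup (T : X -> Y) : \bar R :=
  ereal_sup [set Gnorm re G (fun x => (G x + w *: T x)%R) | w in [set w : K | `|w| = 1]].

Lemma rotation_sup_le T : bdd_linear G -> Gnorm_is_norm re G -> bdd_linear T ->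
  (rotation_sup T <= 1 + Gnorm re G T)%E.
Proof.
move=> bG nG bT; apply/ereal_supP => _ [w w1 <-].
have [_ GwT_le _ _] := nG G _ bG (bdd_linear_scale w bT).
have [_ _ wT_eq _] := nG T T bT bT.
apply: le_trans GwT_le _; rewrite wT_eq w1 re1 mul1e leeD2r //.
exact: Gnorm_G_le1.
Qed.

Hypothesis polar : forall l : K, exists2 w, `|w| = 1 & re (w * l) = re `|l|.

Lemma rotation_sup_ge T : (1 + Gnumradius re G T <= rotation_sup T)%E.
Proof.
rewrite -leeBrDl //; apply/ereal_supP => _ [l Vl <-]; rewrite leeBrDl //.
have [w w1 wl] := polar l; rewrite -EFinD -wl.
by apply: le_trans (Gnorm_ge_Gnumrange Vl w1) _; apply: ereal_sup_ubound; exists w.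
Qed.

Hypothesis norming : forall y : Y,
  exists f : Y -> K, [/\ scalar f, forall v, `|f v| <= `|v| & re (f y) = re `|y|].

Lemma Gnumset_large T n : Gnorm re G T = n%:E -> ((1 + n)%:E <= rotation_sup T)%E ->
  forall d dl, 0 < d -> 0 < dl -> exists2 a, Gnumset re G T d a & n - dl <= re `|a|.
Proof.
move=> Tn W d dl d0 dl0.
pose e := Num.min (Num.min dl (d / 2)) (1 / 2).
have e0 : 0 < e by rewrite !lt_min dl0 !divr_gt0.
have [edl ed e1] : [/\ e <= dl, e <= d / 2 & e <= 1 / 2] by rewrite /e !ge_min !lexx !orbT.
have : ((1 + n - e)%:E < rotation_sup T)%E by apply: lt_le_trans W; rewrite lte_fin gtrBl.
move=> /ereal_sup_gt [_ [w w1 <-] GwT].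
have Tfin : Gnorm re G T \is a fin_num by rewrite Tn.
have [d' d'0] := Gsup_lt_Gnorm Tfin e0; rewrite Tn => Td'.
have [x [x1 Gx GwTx]] := Gsup_gt (lt_le_trans GwT (Gnorm_le_Gsup _ d'0)).
have := le_lt_trans (Gsup_ub T x1 Gx) Td'; rewrite -EFinD lte_fin => Tx.
have y0 : G x + w *: T x != 0.
  by apply: contraTneq GwTx => ->; rewrite normr0 re0; have := re_norm_ge0 (T x); lra.
have [f [lf fle fy]] := norming (G x + w *: T x).
have ys1 := dual_sphere_norming lf fle y0 fy.
have fGwT : f (G x + w *: T x) = f (G x) + w * f (T x) by rewrite addrC lf addrC.
have fTx : re (w * f (T x)) <= re `|f (T x)|.
  by apply: le_trans (re_le_norm _) _; rewrite re_normM w1 re1 mul1r.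
have fTx' : re `|f (T x)| <= re `|T x| by exact: dual_sphere_le ys1.
have fGx : re (f (G x)) <= 1.
  by apply: le_trans (re_le_norm _) (le_trans (dual_sphere_le _ ys1) (norm_G_le1 x1)).
move: GwTx; rewrite -fy fGwT reD => GwTx.
exists (f (T x)); last lra.
by exists x, (f : Y -> K^o); split => //; lra.
Qed.

Hypothesis nested_bounded_adherent : forall (F : R -> set K) (M : R),
  (forall d d', 0 < d -> d <= d' -> F d `<=` F d') ->
  (forall d, 0 < d -> F d !=set0) ->
  (forall d a, 0 < d -> F d a -> re `|a| <= M) ->
  exists l, forall d e, 0 < d -> 0 < e -> exists2 a, F d a & re `|a - l| < e.

Lemma Gnorm_le_Gnumradius T n : Gnorm re G T = n%:E ->
  ((1 + n)%:E <= rotation_sup T)%E -> (n%:E <= Gnumradius re G T)%E.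
Proof.
move=> Tn W; apply/lee_subgt0Pr => dl dl0; rewrite -EFinB.
have Tfin : Gnorm re G T \is a fin_num by rewrite Tn.
have [d1 d10] := Gsup_lt_Gnorm Tfin ltr01; rewrite Tn -EFinD => Td1.
pose F d := [set a | Gnumset re G T (Num.min d d1) a /\ n - dl <= re `|a|].
have [||| l Fl] := nested_bounded_adherent (F := F) (M := n + 1).
- move=> d d' d0 dd' a [Va al]; split => //; apply: Gnumset_le Va.
  by rewrite le_min !ge_min dd' lexx orbT.
- move=> d d0; have [|a Va al] := Gnumset_large Tn W (d := Num.min d d1) _ dl0.
    by rewrite lt_min d0 d10.
  by exists a.
- move=> d a d0 [Va _]; have [x [x1 Gx ax]] := Gnumset_witness Va.
  have Gx1 : 1 - d1 < re `|G x| by apply: le_lt_trans Gx; rewrite lerB // ge_min lexx orbT.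
  by have := le_lt_trans (Gsup_ub T x1 Gx1) Td1; rewrite lte_fin; lra.
have Vl : Gnumrange re G T l.
  move=> d d0; apply/closure_reP => e e0; have [a [Va _] al] := Fl d e d0 e0.
  by exists a => //; apply: Gnumset_le Va; rewrite ge_min lexx.
have ldl : n - dl <= re `|l|.
  apply/ler_addgt0Pr => e e0; have [a [_ al] la] := Fl 1 e ltr01 e0.
  by have := re_normD l (a - l); rewrite addrC subrK; lra.
apply: le_trans (_ : (re `|l|)%:E <= _)%E; first by rewrite lee_fin.
by apply: ereal_sup_ubound; exists l.
Qed.

Theorem rotation_sup_eq_Gnorm_iff T : bdd_linear G -> Gnorm_is_norm re G -> bdd_linear T ->
  rotation_sup T = (1 + Gnorm re G T)%E <-> Gnumradius re G T = Gnorm re G T.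
Proof.
move=> bG nG bT; have [Tfin _ _ _] := nG T T bT bT.
have Tn : Gnorm re G T = (fine (Gnorm re G T))%:E by rewrite fineK.
have W_le := rotation_sup_le bG nG bT.
split => [WE | nuE]; apply/le_anti/andP; split.
- exact: Gnumradius_le_Gnorm.
- by rewrite Tn; apply: Gnorm_le_Gnumradius; rewrite -?Tn // WE Tn.
- exact: W_le.
- by rewrite -nuE; exact: rotation_sup_ge.
Qed.

End GNorm.
End RealPart.

Section RealScalars.
Variable R : realType.

Lemma nested_bounded_adherent_real (F : R -> set R) (M : R) :
  (forall d d', 0 < d -> d <= d' -> F d `<=` F d') ->
  (forall d, 0 < d -> F d !=set0) ->
  (forall d a, 0 < d -> F d a -> `|a| <= M) ->
  exists l, forall d e, 0 < d -> 0 < e -> exists2 a, F d a & `|a - l| < e.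
Proof.
move=> Fle F0 FM.
have Fsup d : 0 < d -> has_sup (F d).
  move=> d0; split; first exact: F0.
  by exists M => a /(FM _ _ d0); rewrite ler_norml => /andP[].
have sup_ub d a : 0 < d -> F d a -> a <= sup (F d).
  by move=> d0; apply: sup_upper_bound (Fsup d d0) a.
have sup_le d d' : 0 < d -> d <= d' -> sup (F d) <= sup (F d').
  move=> d0 dd'; apply: ge_sup; first exact: F0.
  by move=> a Fa; exact: sup_ub _ _ (lt_le_trans d0 dd') (Fle _ _ d0 dd' _ Fa).
pose S := [set sup (F d) | d in [set d : R | 0 < d]].
have Sinf : has_inf S.
  split; first by exists (sup (F 1)), 1 => //; exact: ltr01.
  exists (- M) => _ [d d0 <-]; have [a Fa] := F0 d d0.
  apply: le_trans (sup_ub _ _ d0 Fa).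
  by have := FM _ _ d0 Fa; rewrite ler_norml => /andP[].
exists (inf S) => d e d0 e0.
have [_ [d' d'0 <-] d'S] := inf_adherent e0 Sinf.
have dd'0 : 0 < Num.min d d' by rewrite lt_min d0 d'0.
have [a Fa aF] := sup_adherent e0 (Fsup _ dd'0).
exists a; first by apply: Fle Fa => //; rewrite ge_min lexx.
have := sup_ub _ _ dd'0 Fa.
have : sup (F (Num.min d d')) <= sup (F d') by apply: sup_le; rewrite ?ge_min ?lexx ?orbT.
have : inf S <= sup (F (Num.min d d')) by apply: ge_inf; [case: Sinf | exists (Num.min d d')].
rewrite ltr_norml; move: aF d'S; lra.
Qed.

Lemma polar_real (l : R) : exists2 w : R, `|w| = 1 & w * l = `|l|.
Proof.
have [l0|l0] := leP 0 l; first by exists 1; rewrite ?normr1 ?mul1r ?ger0_norm.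
by exists (-1); rewrite ?normrN ?normr1 ?mulN1r ?ltr0_norm.
Qed.

Lemma norming_real (Y : normedModType R) (y : Y) :
  exists f : Y -> R, [/\ scalar f, forall v, `|f v| <= `|v| & f y = `|y|].
Proof.
have [f [lf fle fy]] := hahn_banach_sublinear (@ler_normD _ Y) (@normrZ _ Y) y.
exists f; split => // v; rewrite ler_norml fle andbT lerNl.
by have := fle (- v); rewrite -[- v]scaleN1r (scalable_linear lf) /= mulN1r scaleN1r normrN.
Qed.

Theorem Gnumradius_eq_Gnorm_real : @thm3p1_for R R (fun x : R => x).
Proof.
move=> X Y G T bG G1 nG bT.
apply: (rotation_sup_eq_Gnorm_iff (emb := idfun)) => //.
- exact: ler_norm.
- by move=> l; have [w] := polar_real l; exists w.
- by move=> y; have [f] := norming_real y; exists f.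
- exact: nested_bounded_adherent_real.
Qed.

End RealScalars.

Section ComplexScalars.
Import complex.
Local Open Scope complex_scope.
Variable R : realType.
Local Notation C := (complex.complex R).

Lemma ReD : {morph @Re R : a b / a + b}.
Proof. by move=> [a b] [c d]. Qed.

Lemma Re_norm (a : C) : Re `|a| = Num.sqrt (Re a ^+ 2 + Im a ^+ 2).
Proof. by rewrite normc_def. Qed.

Lemma normr_Re_le (a : C) : `|Re a| <= Re `|a|.
Proof. by rewrite Re_norm -sqrtr_sqr ler_wsqrtr // lerDl sqr_ge0. Qed.

Lemma normr_Im_le (a : C) : `|Im a| <= Re `|a|.
Proof. by rewrite Re_norm -sqrtr_sqr ler_wsqrtr // lerDr sqr_ge0. Qed.

Lemma Re_norm_le (a : C) : Re `|a| <= `|Re a| + `|Im a|.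
Proof.
rewrite Re_norm -[X in _ <= X]ger0_norm ?addr_ge0 // -sqrtr_sqr ler_wsqrtr //.
rewrite -[Re a ^+ 2]real_normK ?num_real // -[Im a ^+ 2]real_normK ?num_real //.
by rewrite sqrrD -addrA lerD2l lerDr mulrn_wge0 // mulr_ge0.
Qed.

Lemma norm_real_complex (t : R) : `|t%:C| = `|t|%:C.
Proof. by rewrite normc_def /= expr0n addr0 sqrtr_sqr. Qed.

Lemma Re_real_complexM (t : R) (a : C) : Re (t%:C * a) = t * Re a.
Proof. by case: a => a b /=; rewrite mul0r subr0. Qed.

Lemma Re_le_norm (a : C) : Re a <= Re `|a|.
Proof. exact: le_trans (ler_norm _) (normr_Re_le a). Qed.

Lemma Re_nnegK (a : C) : 0 <= a -> (Re a)%:C = a.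
Proof. by case: a => a b /ger0_Im /= ->. Qed.

Lemma polar_complex (l : C) : exists2 w : C, `|w| = 1 & Re (w * l) = Re `|l|.
Proof.
have [->|l0] := eqVneq l 0; first by exists 1; rewrite ?normr1 ?mulr0 ?normr0.
exists (`|l| / l); last by rewrite divfK.
by rewrite normrM normfV normr_id divff // normr_eq0.
Qed.

Lemma nested_bounded_adherent_complex (F : R -> set C) (M : R) :
  (forall d d', 0 < d -> d <= d' -> F d `<=` F d') ->
  (forall d, 0 < d -> F d !=set0) ->
  (forall d a, 0 < d -> F d a -> Re `|a| <= M) ->
  exists l, forall d e, 0 < d -> 0 < e -> exists2 a, F d a & Re `|a - l| < e.
Proof.
move=> Fle F0 FM.
have [||| x0 Fx0] := nested_bounded_adherent_real (F := fun d => @Re R @` F d) (M := M).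
- by move=> d d' d0 dd' _ [a Fa <-]; exists a => //; exact: Fle Fa.
- by move=> d d0; have [a Fa] := F0 d d0; exists (Re a), a.
- by move=> d _ d0 [a Fa <-]; exact: le_trans (normr_Re_le a) (FM _ _ d0 Fa).
(* Only points whose real part is [d]-close to [x0] compete for the imaginary
   part, so both coordinates approach the limit along the same family. *)
pose F' d := [set a | F d a /\ `|Re a - x0| < d].
have [||| y0 Fy0] := nested_bounded_adherent_real (F := fun d => @Im R @` F' d) (M := M).
- move=> d d' d0 dd' _ [a [Fa ax0] <-]; exists a => //.
  by split; [exact: Fle Fa | exact: lt_le_trans ax0 dd'].
- by move=> d d0; have [_ [a Fa <-] ax0] := Fx0 d d d0 d0; exists (Im a), a.
- by move=> d _ d0 [a [Fa _] <-]; exact: le_trans (normr_Im_le a) (FM _ _ d0 Fa).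
exists (x0 +i* y0) => d e d0 e0.
have e20 : 0 < e / 2 by rewrite divr_gt0.
have de0 : 0 < Num.min d (e / 2) by rewrite lt_min d0 e20.
have [_ [a [Fa ax0] <-] ay0] := Fy0 _ _ de0 e20.
exists a; first by apply: Fle Fa => //; rewrite ge_min lexx.
apply: le_lt_trans (Re_norm_le _) _.
have : Num.min d (e / 2) <= e / 2 by rewrite ge_min lexx orbT.
by case: a {Fa} ax0 ay0 => a b /=; lra.
Qed.

Section Realified.
Variable Y : normedModType C.

Definition realified : Type := Y.
HB.instance Definition _ := GRing.Zmodule.on realified.

Definition real_scale (t : R) (v : realified) : realified := t%:C *: (v : Y).

Lemma real_scaleA s t v : real_scale s (real_scale t v) = real_scale (s * t) v.
Proof. by rewrite /real_scale scalerA rmorphM. Qed.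

Lemma real_scale1 v : real_scale 1 v = v.
Proof. by rewrite /real_scale rmorph1 scale1r. Qed.

Lemma real_scaleDr t : {morph real_scale t : u v / u + v}.
Proof. by move=> u v; rewrite /real_scale scalerDr. Qed.

Lemma real_scaleDl v : {morph real_scale^~ v : s t / s + t}.
Proof. by move=> s t; rewrite /real_scale rmorphD scalerDl. Qed.

HB.instance Definition _ := GRing.Zmodule_isLmodule.Build R realified
  real_scaleA real_scale1 real_scaleDr real_scaleDl.

Lemma norming_complex (y : Y) :
  exists f : Y -> C, [/\ scalar f, forall v, `|f v| <= `|v| & Re (f y) = Re `|y|].
Proof.
have p_add (u v : realified) : Re `|u + v| <= Re `|u| + Re `|v|.
  by have := ler_normD (u : Y) v; rewrite lecE ReD => /andP[].
have p_scale t (v : realified) : Re `|t *: v| = `|t| * Re `|v|.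
  change (Re `|t%:C *: (v : Y)| = `|t| * Re `|v|).
  by rewrite normrZ norm_real_complex Re_real_complexM.
have [u [lu ule uy]] := hahn_banach_sublinear p_add p_scale (y : realified).
have uD (v w : Y) : u (v + w) = u v + u w by have := lu 1 v w; rewrite scale1r mul1r.
have uZ t (v : Y) : u (t%:C *: v) = t * u v := scalable_linear lu t v.
have uN (v : Y) : u (- v) = - u v by rewrite -scaleN1r -(rmorphN1 (real_complex R)) uZ mulN1r.
have uCZ a (v : Y) : u (a *: v) = Re a * u v + Im a * u ('i *: v).
  by rewrite {1}[a]complexE scalerDl (mulrC _ (Im a)%:C) -(scalerA (Im a)%:C) uD !uZ.
(* A complex functional is determined by its real part: Im (f v) = - Re (f ('i *: v)). *)
pose f (v : Y) : C := u v +i* (- u ('i *: v)).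
have lf : scalar f.
  move=> a v w; rewrite /f scalerDr !uD.
  have iaZ : 'i *: (a *: v) = a *: ('i *: v) by rewrite scalerA mulrC -scalerA.
  have iiZ : 'i *: ('i *: v) = - v by rewrite scalerA -expr2 sqr_i scaleN1r.
  rewrite iaZ (uCZ a v) (uCZ a ('i *: v)) iiZ uN.
  by case: a {iaZ} => al be; apply/eqP; rewrite eq_complex /=; apply/andP; split; apply/eqP; ring.
exists f; split => // v.
have [->|fv0] := eqVneq (f v) 0; first by rewrite normr0.
pose w := `|f v| / f v.
have w1 : `|w| = 1 by rewrite /w normrM normfV normr_id divff // normr_eq0.
have fw : f (w *: v) = `|f v| by rewrite (scalable_linear lf) /= /w divfK.
have : Re (f (w *: v)) <= Re `|w *: v| := ule (w *: v).
rewrite fw normrZ w1 mul1r => fvv.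
by rewrite -(Re_nnegK (normr_ge0 (f v))) -(Re_nnegK (normr_ge0 v)) lecR.
Qed.

End Realified.

Theorem Gnumradius_eq_Gnorm_complex : @thm3p1_for R C (@Re R).
Proof.
move=> X Y G T bG G1 nG bT.
apply: (rotation_sup_eq_Gnorm_iff (emb := real_complex R)) => //.
- exact: ReD.
- exact: Re_le_norm.
- exact: lecR.
- exact: Re_nnegK.
- exact: polar_complex.
- exact: norming_complex.
- exact: nested_bounded_adherent_complex.
Qed.

End ComplexScalars.

Theorem theorem3p1 (R : realType) :
  @thm3p1_for R R (fun x : R => x) /\
  @thm3p1_for R (complex.complex R) (@complex.Re R).
Proof. by split; [exact: Gnumradius_eq_Gnorm_real | exact: Gnumradius_eq_Gnorm_complex]. Qed.
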